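(* Let $n \ge 3$, let $k,\ell \in \mathbb{N}_0$, $1 \le a_1 < \cdots < a_k < n$, $0 \le b_1 < \cdots < b_\ell < n$, and suppose the set $C=\{r^{a_1},\ldots,r^{a_k}, r^{b_1}s, \ldots, r^{b_\ell}s\}$ is closed under inversion in $\mathrm{Dih}(n)$. Let $G = \mathrm{Cay}(\mathrm{Dih}(n), C)$. For each $n$-th root of unity $\zeta$ let \[ A_\zeta = \begin{bmatrix} \sum_{j=1}^k \zeta^{a_j} & \sum_{j=1}^\ell \zeta^{-b_j} \\ \sum_{j=1}^\ell \zeta^{b_j} & \sum_{j=1}^k \zeta^{a_j}\end{bmatrix}. \] Then $G$ is a nut graph if and only if exactly one of the matrices $A_\zeta$ has $0$ as a simple eigenvalue, while all the other $A_\zeta$ are invertible.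
   Context: $\mathrm{Dih}(n) = \langle r, s \mid r^n = s^2 = e,\ srs = r^{-1}\rangle$ is the dihedral group of order $2n$. For a finite group $\Gamma$ with identity $e$ and $C \subseteq \Gamma\setminus\{e\}$ closed under inversion, $\mathrm{Cay}(\Gamma, C)$ is the graph with vertex set $\Gamma$ in which $u,v$ are adjacent iff $vu^{-1}\in C$. A nut graph is a graph with at least two vertices whose adjacency matrix has eigenvalue $0$ with multiplicity exactly one, such that the corresponding eigenvector has no zero entries. *)

From HB Require Import structures.
From mathcomp Require Import all_boot all_order all_algebra all_field.
Set Implicit Arguments. Unset Strict Implicit. Unset Printing Implicit Defensive.
Import Order.TTheory GRing.Theory Num.Theory.
Local Open Scope ring_scope.

(* Dihedral group Dih(n) of order 2n: the element (i, e) stands for r^i s^e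
   (e = false : r^i, e = true : r^i s), with i : 'I_n. *)
Definition Dih (n : nat) : finType := ('I_n * bool)%type.

Definition modI n (i : 'I_n) (m : nat) : 'I_n :=
  Ordinal (ltn_pmod m (leq_ltn_trans (leq0n i) (ltn_ord i))).

(* (r^i s^e)(r^j s^f) = r^(i + (-1)^e j) s^(e+f), using s r^j = r^(-j) s *)
Definition dih_mul n (x y : Dih n) : Dih n :=
  let: (i, e) := x in let: (j, f) := y in
  (modI i (i + (if e then n - j else j))%N, addb e f).

Definition dih_inv n (x : Dih n) : Dih n :=
  let: (i, e) := x in if e then (i, true) else (modI i (n - i)%N, false).

Definition Cset n (a b : seq nat) : {set Dih n} :=
  [set x : Dih n | if x.2 then (val x.1 \in b) else (val x.1 \in a)].

Definition cay_adj n (C : {set Dih n}) : rel (Dih n) :=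
  fun u v => dih_mul v (dih_inv u) \in C.

Definition adjmx (T : finType) (e : rel T) : 'M[algC]_#|T| :=
  \matrix_(i, j) (e (enum_val i) (enum_val j))%:R.

Definition nut_graph (T : finType) (e : rel T) : Prop :=
  (1 < #|T|)%N /\
  mup 0 (char_poly (adjmx e)) = 1%N /\
  exists v : 'cV[algC]_#|T|, adjmx e *m v = 0 /\ v != 0 /\ forall i, v i 0 != 0.

Definition Amat (a b : seq nat) (z : algC) : 'M[algC]_2 :=
  \matrix_(i < 2, j < 2)
    if i == j then \sum_(x <- a) z ^+ x
    else if (val i == 0)%N then \sum_(x <- b) z ^- x
    else \sum_(x <- b) z ^+ x.

From HB Require Import structures.
From mathcomp Require Import all_boot all_order all_algebra all_field.
Set Implicit Arguments. Unset Strict Implicit. Unset Printing Implicit Defensive.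
Import Order.TTheory GRing.Theory Num.Theory.
Local Open Scope ring_scope.

(* For an n-th root of unity z, the function r^p |-> z^p (zero on reflections)
   and the function r^p s |-> z^-p (zero on rotations) span a subspace that the
   adjacency matrix M of Cay(Dih(n), C) maps to itself, acting there by A_z;
   this is where inverse-closedness of C enters.  For z = w^k, w a primitive
   root, these 2n functions form a basis (orthogonality of the characters of
   Z/n), so M is similar to the block diagonal matrix with blocks A_(w^k) and
   the multiplicity of 0 in M is the sum of its multiplicities in the A_(w^k).
   It is 1 iff exactly one A_z is singular, with 0 simple.  Since A_z has equal
   diagonal entries, a kernel vector of it then has both coordinates nonzero,
   and it lifts to a kernel vector of M without zero entries. *)

Definition fun_mx (R : Type) (T : finType) (F : T -> T -> R) : 'M[R]_#|T| :=
  \matrix_(i, j) F (enum_val i) (enum_val j).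

Lemma fun_mxE (R : Type) (T : finType) (F : T -> T -> R) i j :
  fun_mx F i j = F (enum_val i) (enum_val j).
Proof. by rewrite mxE. Qed.

Lemma sum_enum_val (R : nmodType) (T : finType) (F : T -> R) :
  \sum_(i < #|T|) F (enum_val i) = \sum_t F t.
Proof.
rewrite [RHS](reindex (fun i : 'I_#|T| => enum_val i)) //.
by exists enum_rank => t _; rewrite ?enum_valK ?enum_rankK.
Qed.

Lemma sum_pair (R : nmodType) (I J : finType) (F : I * J -> R) :
  \sum_p F p = \sum_i \sum_j F (i, j).
Proof. by rewrite pair_big; apply: eq_bigr => [[]]. Qed.

Lemma eq_fun_mx (R : Type) (T : finType) (F G : T -> T -> R) :
  (forall x y, F x y = G x y) -> fun_mx F = fun_mx G.
Proof. by move=> eFG; apply/matrixP => i j; rewrite !mxE eFG. Qed.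

Lemma mulmx_fun (R : pzSemiRingType) (T : finType) (F G : T -> T -> R) :
  fun_mx F *m fun_mx G = fun_mx (fun x y => \sum_t F x t * G t y).
Proof.
apply/matrixP => i j; rewrite !mxE -[RHS]sum_enum_val.
by apply: eq_bigr => k _; rewrite !mxE.
Qed.

Lemma fun_mx_delta (R : pzSemiRingType) (T : finType) :
  fun_mx (fun x y : T => (x == y)%:R) = 1%:M :> 'M[R]_#|T|.
Proof. by apply/matrixP => i j; rewrite !mxE -[i == j](inj_eq enum_val_inj). Qed.

Lemma adjmxE (T : finType) (e : rel T) : adjmx e = fun_mx (fun x y => (e x y)%:R).
Proof. by []. Qed.

Lemma det_mx2 (R : comPzRingType) (A : 'M[R]_2) :
  \det A = A 0 0 * A 1 1 - A 0 1 * A 1 0.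
Proof.
rewrite (expand_det_row _ 0) !big_ord_recl big_ord0 addr0 /cofactor !det_mx11 !mxE /=.
rewrite expr0 expr1 !mul1r mulN1r mulrN.
by congr (_ * A _ _ - A _ _ * A _ _); apply: val_inj.
Qed.

Definition bool_ord2 (b : bool) : 'I_2 := if b then 0 else 1.

Lemma bool_ord2_inj : injective bool_ord2.
Proof. by case=> [] [] // /(congr1 val). Qed.

Lemma bool_ord2_eq0 (i : 'I_2) : bool_ord2 (i == 0) = i.
Proof. by apply: val_inj; case: i => [[|[]]]. Qed.

Lemma sum_bool_ord2 (R : nmodType) (F : 'I_2 -> R) :
  \sum_(f : bool) F (bool_ord2 f) = \sum_(i < 2) F i.
Proof. by rewrite big_bool /= !big_ord_recl big_ord0 addr0; congr (_ + F _); apply: val_inj. Qed.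

Definition block_diag2 (R : pzSemiRingType) m (B : 'I_m -> 'M[R]_2) :
    'M[R]_#|{: 'I_m * bool}| :=
  fun_mx (fun x y => if x.1 == y.1 then B x.1 (bool_ord2 x.2) (bool_ord2 y.2) else 0).

Section BlockDiag2.

Variable m : nat.

Lemma enum_ordS_bool : enum {: 'I_m.+1 * bool} =
  (ord0, true) :: (ord0, false) ::
  map (fun p : 'I_m * bool => (lift ord0 p.1, p.2)) (enum {: 'I_m * bool}).
Proof.
rewrite !enumT unlock /= /prod_enum enum_ordSl /=.
have -> : enum {: bool} = [:: true; false].
  by rewrite enumT unlock.
by congr (_ :: _ :: _); elim: (enum _) => //= x s ->.
Qed.

Lemma card_ordS_bool : #|{: 'I_m.+1 * bool}| = (2 + #|{: 'I_m * bool}|)%N.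
Proof. by rewrite !cardT enum_ordS_bool /= size_map. Qed.

Let cast_ordS := cast_ord (esym card_ordS_bool).

Lemma enum_val_ordS_bool_lshift (i : 'I_2) :
  enum_val (cast_ordS (lshift _ i)) = (ord0, i == 0).
Proof. by rewrite (enum_val_nth (ord0, true)) enum_ordS_bool; case: i => [[|[]]]. Qed.

Lemma enum_val_ordS_bool_rshift (j : 'I_#|{: 'I_m * bool}|) :
  enum_val (cast_ordS (rshift 2 j)) = (lift ord0 (enum_val j).1, (enum_val j).2).
Proof.
rewrite (enum_val_nth (ord0, true)) enum_ordS_bool /= add0n.
by rewrite (nth_map (enum_val j)) -?cardT // -(enum_val_nth (enum_val j)).
Qed.

End BlockDiag2.

Lemma det_castmx (R : comPzRingType) m m' (e : m = m') (A : 'M[R]_m) :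
  \det (castmx (e, e) A) = \det A.
Proof. by case: m' / e; rewrite castmx_id. Qed.

Lemma det_block_diag2 (R : comPzRingType) m (B : 'I_m -> 'M[R]_2) :
  \det (block_diag2 B) = \prod_k \det (B k).
Proof.
elim: m B => [|m IH] B.
  have e : #|{: 'I_0 * bool}| = 0%N by rewrite card_prod card_ord.
  by rewrite -(det_castmx e) det_mx00 big_ord0.
rewrite -(det_castmx (card_ordS_bool m)) big_ord_recl -(IH (fun k => B (lift ord0 k))).
rewrite -(det_ublock _ 0); congr (\det _).
apply/matrixP => i j; rewrite castmxE /=.
rewrite -(splitK i) -(splitK j); case: (split i) (split j) => i' [] j' /=.
- by rewrite block_mxEul fun_mxE !enum_val_ordS_bool_lshift /= !bool_ord2_eq0.
- by rewrite block_mxEur fun_mxE enum_val_ordS_bool_lshift enum_val_ordS_bool_rshift mxE.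
- by rewrite block_mxEdl fun_mxE enum_val_ordS_bool_lshift enum_val_ordS_bool_rshift mxE.
- by rewrite block_mxEdr !fun_mxE !enum_val_ordS_bool_rshift /= (inj_eq lift_inj).
Qed.

Lemma char_poly_block_diag2 (R : comNzRingType) m (B : 'I_m -> 'M[R]_2) :
  char_poly (block_diag2 B) = \prod_k char_poly (B k).
Proof.
rewrite /char_poly -det_block_diag2; congr (\det _).
apply/matrixP => i j; rewrite !mxE -[i == j](inj_eq enum_val_inj).
case: (enum_val i) (enum_val j) => [k f] [k' f'] /=.
rewrite xpair_eqE; have [->|_] := eqVneq k k'; last by rewrite /= subr0 mulr0n.
by rewrite (inj_eq bool_ord2_inj).
Qed.

Section CharPoly.

Variable F : fieldType.

Lemma char_poly_similar n (M D P : 'M[F]_n) :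
  P \in unitmx -> M *m P = P *m D -> char_poly M = char_poly D.
Proof.
move=> uP eMP.
have E : char_poly_mx M *m map_mx polyC P = map_mx polyC P *m char_poly_mx D.
  by rewrite /char_poly_mx mulmxBl mulmxBr mul_scalar_mx mul_mx_scalar -!map_mxM eMP.
have nz : (\det P)%:P != 0 by rewrite polyC_eq0 -unitfE -unitmxE.
by have := congr1 determinant E; rewrite !det_mulmx det_map_mx mulrC => /(mulfI nz).
Qed.

Lemma mup_prod (I : Type) (s : seq I) (p : I -> {poly F}) x :
  all (fun i => p i != 0) s ->
  mup x (\prod_(i <- s) p i) = (\sum_(i <- s) mup x (p i))%N.
Proof.
elim: s => [|i s IH] /=; first by rewrite !big_nil mupNroot // rootC oner_eq0.
case/andP => pi ps; rewrite !big_cons mupM ?IH //.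
by rewrite prodf_seq_neq0; apply: sub_all ps => j.
Qed.

Lemma mup0_char_poly_eq0 n (A : 'M[F]_n) : (mup 0 (char_poly A) == 0%N) = (A \in unitmx).
Proof.
have cA0 : char_poly A != 0 := monic_neq0 (char_poly_monic A).
have rootE : root (char_poly A) 0 = (\det A == 0).
  rewrite /root horner_coef0 char_poly_det mulf_eq0 expf_eq0 oppr_eq0 oner_eq0.
  by rewrite andbF.
rewrite unitmxE unitfE -rootE; apply/eqP/idP => [m0|/mupNroot //].
by apply/negP => r0; move: (mup_geq 0 1 cA0); rewrite m0 expr1 dvdp_XsubCl r0.
Qed.

Lemma mup0_char_poly_mx2 (A : 'M[F]_2) :
  \det A = 0 -> \tr A = 0 -> mup 0 (char_poly A) = 2%N.
Proof.
move=> detA trA; suff -> : char_poly A = ('X - 0%:P) ^+ 2 by rewrite mup_XsubCX eqxx.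
rewrite subr0; apply/polyP => i; rewrite coefXn.
case: i => [|[|[|i]]] /=.
- by rewrite char_poly_det detA mulr0.
- by have := char_poly_trace A (erefl true); rewrite trA oppr0.
- by have /monicP := char_poly_monic A; rewrite /lead_coef size_char_poly.
- by rewrite nth_default // size_char_poly.
Qed.

Lemma mx2_kernel_eqdiag (A : 'M[F]_2) :
  A 0 0 = A 1 1 -> mup 0 (char_poly A) = 1%N ->
  exists2 c : 'cV[F]_2, A *m c = 0 & forall i, c i 0 != 0.
Proof.
move=> eqdiag mA.
have lift01 : lift 0 0 = 1 :> 'I_2 by apply: val_inj.
have detA : \det A = 0.
  by apply/eqP/negbNE; rewrite -unitfE -unitmxE -mup0_char_poly_eq0 mA.
have A00 : A 0 0 != 0.
  apply: contra_eqN mA => /eqP A00; rewrite mup0_char_poly_mx2 //.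
  by rewrite /mxtrace !big_ord_recl big_ord0 lift01 -eqdiag A00 !addr0.
have offdiag : A 0 1 * A 1 0 = A 0 0 ^+ 2.
  by apply/eqP; rewrite eq_sym -subr_eq0 expr2; move: detA; rewrite det_mx2 -eqdiag => /eqP.
(* A 0 0 <> 0 as otherwise trace and determinant vanish; hence A 0 1 <> 0. *)
exists (\col_i (if i == 0 then A 0 1 else - A 0 0)).
  apply/matrixP => i j; rewrite !mxE !big_ord_recl big_ord0 !mxE /= addr0.
  have [->|->] : i = 0 \/ i = 1 by case: i => [[|[|//]]] ?; [left|right]; apply: val_inj.
    by rewrite lift01 mulrN mulrC subrr.
  by rewrite lift01 mulrN -eqdiag mulrC offdiag expr2 subrr.
move=> i; rewrite mxE; case: ifP => _; last by rewrite oppr_eq0.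
by apply: contraNneq (expf_neq0 2 A00) => A01; rewrite -offdiag A01 mul0r.
Qed.

End CharPoly.

Lemma modn_negK n p : (p < n)%N -> ((n - (n - p) %% n) %% n = p)%N.
Proof.
case: p => [|p] pn; first by rewrite subn0 modnn subn0 modnn.
have npn : (n - p.+1 < n)%N by rewrite ltn_subrL (leq_ltn_trans _ pn).
by rewrite (modn_small npn) subKn ?modn_small // ltnW.
Qed.

Lemma sum_seq_indicator (R : pzSemiRingType) n (s : seq nat) (F : nat -> R) :
  uniq s -> all (fun y => y < n)%N s ->
  \sum_(y <- s) F y = \sum_(q < n) ((val q \in s)%:R * F q).
Proof.
move=> s_uniq s_lt.
rewrite -(big_mkord xpredT (fun q => (q \in s)%:R * F q)) /index_iota subn0.
rewrite [RHS](eq_bigr (fun q => if q \in s then F q else 0)); last first.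
  by move=> q _; case: (q \in s); rewrite ?mul1r ?mul0r.
rewrite -big_mkcond -big_filter; apply: perm_big.
apply: uniq_perm => //; first by rewrite filter_uniq // iota_uniq.
move=> y; rewrite mem_filter mem_iota add0n andbC /=.
by case yin: (y \in s); rewrite ?andbF // (allP s_lt).
Qed.

Section RootOfUnitySums.

Variables (F : fieldType) (n : nat) (z : F).
Hypotheses (n_gt0 : (0 < n)%N) (zn1 : z ^+ n = 1).

Lemma root_unity_neq0 : z != 0.
Proof.
by apply: contra_eq_neq zn1 => ->; rewrite expr0n eqn0Ngt n_gt0 eq_sym oner_neq0.
Qed.

(* Substituting y = q + t mod n. *)
Lemma sum_rotate (s : seq nat) t : uniq s -> all (fun y => y < n)%N s ->
  z ^+ t * \sum_(q < n) ((((q + t) %% n)%N \in s)%:R * z ^+ q) = \sum_(y <- s) z ^+ y.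
Proof.
move=> s_uniq s_lt; rewrite (sum_seq_indicator _ s_uniq s_lt) big_distrr /=.
pose h (q : 'I_n) : 'I_n := Ordinal (ltn_pmod (q + t) n_gt0).
have h_inj : injective h.
  move=> q1 q2 /(congr1 val) /eqP; rewrite eqn_modDr !modn_small // => /eqP.
  exact: val_inj.
rewrite [RHS](reindex_inj h_inj); apply: eq_bigr => q _ /=.
by rewrite (expr_mod _ zn1) exprD mulrCA [z ^+ q * _]mulrC.
Qed.

Lemma sum_exprN_sym (s : seq nat) : uniq s -> all (fun y => y < n)%N s ->
  (forall y, y \in s -> ((n - y) %% n)%N \in s) ->
  \sum_(y <- s) z ^- y = \sum_(y <- s) z ^+ y.
Proof.
move=> s_uniq s_lt s_sym; rewrite !(sum_seq_indicator _ s_uniq s_lt).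
pose h (q : 'I_n) : 'I_n := Ordinal (ltn_pmod (n - q) n_gt0).
have hK : involutive h by move=> q; apply: val_inj; rewrite /= modn_negK.
rewrite [RHS](reindex_inj (inv_inj hK)); apply: eq_bigr => q _ /=.
have -> : (((n - q) %% n)%N \in s) = (val q \in s).
  by apply/idP/idP => [/s_sym|/s_sym //]; rewrite modn_negK.
congr (_ * _); apply: mulr1_eq.
by rewrite -exprD -(expr_mod _ zn1) modnDmr subnKC ?modnn ?expr0 // ltnW.
Qed.

End RootOfUnitySums.

Lemma sum_rotateV (F : fieldType) n (z : F) (s : seq nat) t :
  (0 < n)%N -> z ^+ n = 1 -> uniq s -> all (fun y => y < n)%N s ->
  z ^- t * \sum_(q < n) ((((q + t) %% n)%N \in s)%:R / z ^+ q) = \sum_(y <- s) z ^- y.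
Proof.
move=> n_gt0 zn1 s_uniq s_lt.
have zVn1 : z^-1 ^+ n = 1 by rewrite exprVn zn1 invr1.
under [RHS]eq_bigr do rewrite -exprVn.
rewrite -(sum_rotate n_gt0 zVn1 t s_uniq s_lt) exprVn.
by congr (_ * _); apply: eq_bigr => q _; rewrite exprVn.
Qed.

Lemma sum_prim_root_orth (F : fieldType) n (w : F) (k k' : 'I_n) :
  n.-primitive_root w ->
  \sum_(q < n) (w ^+ k) ^+ q / (w ^+ k') ^+ q = (k == k')%:R * n%:R.
Proof.
move=> w_prim; have n_gt0 := prim_order_gt0 w_prim.
have w0 := root_unity_neq0 n_gt0 (prim_expr_order w_prim).
under eq_bigr do rewrite -exprVn -exprMn.
have [<-|neq_kk'] := eqVneq k k'.
  rewrite divff ?expf_neq0 //; under eq_bigr do rewrite expr1n.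
  by rewrite sumr_const card_ord mul1r.
rewrite mul0r; set v := w ^+ k / w ^+ k'.
have v_neq1 : v - 1 != 0.
  rewrite subr_eq0 /v (can2_eq (mulfVK _) (mulfK _)) ?expf_neq0 // mul1r.
  by rewrite (eq_prim_root_expr w_prim) !modn_small // (inj_eq val_inj).
have vn1 : v ^+ n = 1.
  rewrite /v exprMn exprVn -!exprM !(mulnC _ n) !exprM (prim_expr_order w_prim).
  by rewrite !expr1n invr1 mulr1.
by apply/eqP; move: (subrX1 v n); rewrite vn1 subrr => /esym/eqP; rewrite mulf_eq0 (negbTE v_neq1).
Qed.

(* [f = true]: r^p |-> z^p on rotations; [f = false]: r^p s |-> z^-p on
   reflections; both vanish elsewhere. *)
Definition dih_fourier n (z : algC) (f : bool) (x : Dih n) : algC :=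
  if x.2 == f then 0 else if x.2 then z ^- x.1 else z ^+ x.1.

Definition dih_fourier_mx n (w : algC) : 'M[algC]_#|Dih n| :=
  fun_mx (fun x (y : Dih n) => dih_fourier (w ^+ y.1) y.2 x).

Definition dih_fourier_mx_inv n (w : algC) : 'M[algC]_#|Dih n| :=
  fun_mx (fun (y : Dih n) x => n%:R^-1 * dih_fourier (w ^+ y.1)^-1 y.2 x).

Lemma mul_dih_fourier_mx_inv n (w : algC) :
  n.-primitive_root w -> dih_fourier_mx_inv n w *m dih_fourier_mx n w = 1%:M.
Proof.
move=> w_prim; have n_gt0 := prim_order_gt0 w_prim.
have n0 : n%:R != 0 :> algC by rewrite pnatr_eq0 -lt0n.
rewrite mulmx_fun -fun_mx_delta; apply: eq_fun_mx => -[k f] [k' f'].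
rewrite sum_pair xpair_eqE /dih_fourier /=.
case: f; case: f' => /=; under eq_bigr do rewrite big_bool /=.
- under eq_bigr do rewrite !mulr0 add0r exprVn mulrAC -mulrA.
  by rewrite -big_distrr /= sum_prim_root_orth // andbT eq_sym mulrCA mulVf ?mulr1.
- by rewrite andbF big1 // => q _; rewrite !(mulr0, mul0r) addr0.
- by rewrite andbF big1 // => q _; rewrite !(mulr0, mul0r) addr0.
- under eq_bigr do rewrite !mulr0 addr0 exprVn -mulrA invrK.
  by rewrite -big_distrr /= sum_prim_root_orth // andbT mulrCA mulVf ?mulr1.
Qed.

Definition dih_lift n (z : algC) (c : 'cV[algC]_2) : 'cV[algC]_#|Dih n| :=
  \col_i \sum_(g : bool) dih_fourier z g (enum_val i) * c (bool_ord2 g) 0.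

Lemma dih_lift_neq0 n (z : algC) (c : 'cV[algC]_2) i :
  z != 0 -> (forall j, c j 0 != 0) -> dih_lift n z c i 0 != 0.
Proof.
move=> z0 c0; rewrite mxE big_bool /dih_fourier.
by case: (enum_val i) => p [] /=; rewrite mul0r ?add0r ?addr0 mulf_neq0 // ?invr_eq0 expf_neq0.
Qed.

Section CayleyDihedral.

Variables (n : nat) (a b : seq nat).
Hypotheses (n_gt0 : (0 < n)%N) (a_uniq : uniq a) (b_uniq : uniq b).
Hypotheses (a_lt : all (fun y => y < n)%N a) (b_lt : all (fun y => y < n)%N b).
Hypothesis a_sym : forall y, y \in a -> ((n - y) %% n)%N \in a.

Local Notation adj := (cay_adj (Cset n a b)).

Lemma adj_dih_fourier (z : algC) (f : bool) (x : Dih n) : z ^+ n = 1 ->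
  \sum_y (adj x y)%:R * dih_fourier z f y =
  \sum_(g : bool) dih_fourier z g x * Amat a b z (bool_ord2 g) (bool_ord2 f).
Proof.
move=> zn1; have z0 := root_unity_neq0 n_gt0 zn1.
rewrite sum_pair big_bool; under eq_bigr do rewrite big_bool.
case: x => p e; have pn := ltn_ord p.
rewrite /cay_adj /dih_mul /dih_inv /Cset /dih_fourier !mxE /=.
case: e; case: f => /=; under eq_bigr do rewrite !inE /=.
- under eq_bigr do rewrite mulr0 add0r.
  by rewrite mul0r add0r -(sum_rotate n_gt0 zn1 p b_uniq b_lt) mulKf // expf_neq0.
- under eq_bigr do rewrite mulr0 addr0.
  rewrite mul0r add0r -(sum_exprN_sym n_gt0 zn1 a_uniq a_lt a_sym).
  rewrite -(sum_rotateV (n - p) n_gt0 zn1 a_uniq a_lt).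
  by rewrite mulrA -invfM -exprD subnKC ?zn1 ?invr1 ?mul1r // ltnW.
- under eq_bigr do rewrite mulr0 add0r.
  rewrite mul0r addr0 -(sum_rotate n_gt0 zn1 ((n - p) %% n) a_uniq a_lt) mulrA -exprD.
  by rewrite -(expr_mod _ zn1) modnDmr subnKC ?modnn ?expr0 ?mul1r // ltnW.
- under eq_bigr do rewrite mulr0 addr0.
  rewrite mul0r addr0 -(sum_rotateV (n - (n - p) %% n) n_gt0 zn1 b_uniq b_lt).
  rewrite -[in z ^+ p](modn_negK pn) (expr_mod _ zn1).
  by rewrite mulVKf // expf_neq0.
Qed.

Lemma adjmx_dih_fourier_mx (w : algC) : w ^+ n = 1 ->
  adjmx adj *m dih_fourier_mx n w =
  dih_fourier_mx n w *m block_diag2 (fun k : 'I_n => Amat a b (w ^+ k)).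
Proof.
move=> wn1; rewrite adjmxE /block_diag2 !mulmx_fun; apply: eq_fun_mx => x [k f] /=.
have wkn1 : (w ^+ k) ^+ n = 1 by rewrite exprAC wn1 expr1n.
rewrite (adj_dih_fourier _ _ wkn1) sum_pair (bigD1 k) //= [X in _ + X]big1 ?addr0.
  by apply: eq_bigr => g _; rewrite eqxx.
by move=> k' /negbTE neq_k'k; apply: big1 => g _; rewrite neq_k'k mulr0.
Qed.

Lemma char_poly_cay_dih (w : algC) : n.-primitive_root w ->
  char_poly (adjmx adj) = \prod_(k < n) char_poly (Amat a b (w ^+ k)).
Proof.
move=> w_prim; have P_unit := (mulmx1_unit (mul_dih_fourier_mx_inv w_prim)).2.
rewrite (char_poly_similar P_unit (adjmx_dih_fourier_mx (prim_expr_order w_prim))).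
exact: char_poly_block_diag2.
Qed.

Lemma mup0_cay_dih (w : algC) : n.-primitive_root w ->
  mup 0 (char_poly (adjmx adj)) = (\sum_(k < n) mup 0 (char_poly (Amat a b (w ^+ k))))%N.
Proof.
move=> w_prim; rewrite (char_poly_cay_dih w_prim) mup_prod //.
by apply/allP => k _; exact: monic_neq0 (char_poly_monic _).
Qed.

Lemma adjmx_dih_lift (z : algC) (c : 'cV[algC]_2) :
  z ^+ n = 1 -> Amat a b z *m c = 0 -> adjmx adj *m dih_lift n z c = 0.
Proof.
move=> zn1 Ac0; apply/matrixP => i j; rewrite adjmxE /dih_lift !mxE.
under eq_bigr do rewrite !mxE.
rewrite (sum_enum_val (fun y =>
  (adj (enum_val i) y)%:R * \sum_(g : bool) dih_fourier z g y * c (bool_ord2 g) 0)).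
under eq_bigr do rewrite big_distrr /=.
rewrite exchange_big /=; under eq_bigr do under eq_bigr do rewrite mulrA.
under eq_bigr do rewrite -big_distrl /= adj_dih_fourier // big_distrl /=.
rewrite exchange_big /=; apply: big1 => h _; under eq_bigr do rewrite -mulrA.
rewrite -big_distrr /= (sum_bool_ord2 (fun k => Amat a b z (bool_ord2 h) k * c k 0)).
by move/matrixP/(_ (bool_ord2 h) 0): Ac0; rewrite !mxE => ->; rewrite mulr0.
Qed.

Lemma cay_dih_kernel_full_support (z0 : algC) : z0 ^+ n = 1 ->
  mup 0 (char_poly (Amat a b z0)) = 1%N ->
  exists v : 'cV[algC]_#|Dih n|, adjmx adj *m v = 0 /\ v != 0 /\ forall i, v i 0 != 0.
Proof.
move=> z0n1 mz0.
have Adiag : Amat a b z0 0 0 = Amat a b z0 1 1 by rewrite !mxE.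
have [c Ac0 c_neq0] := mx2_kernel_eqdiag Adiag mz0.
have v_neq0 i := @dih_lift_neq0 n _ _ i (root_unity_neq0 n_gt0 z0n1) c_neq0.
exists (dih_lift n z0 c); split; first exact: adjmx_dih_lift.
split=> //; apply: contraNneq (v_neq0 (enum_rank (Ordinal n_gt0, false))) => ->.
by rewrite mxE.
Qed.

Lemma mup0_cay_dih_eq1 : mup 0 (char_poly (adjmx adj)) = 1%N <->
  exists2 z0 : algC, z0 ^+ n = 1 &
    mup 0 (char_poly (Amat a b z0)) = 1%N /\
    forall z : algC, z ^+ n = 1 -> z <> z0 -> Amat a b z \in unitmx.
Proof.
have [w w_prim] := C_prim_root_exists n_gt0.
have wn1 := prim_expr_order w_prim.
have wk_n1 k : (w ^+ k) ^+ n = 1 by rewrite exprAC wn1 expr1n.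
rewrite (mup0_cay_dih w_prim).
split=> [/eqP/sum_nat_eq1 [k0 [_ mk0 mk_eq0]] | [z0 z0n1 [mz0 z_unit]]].
  exists (w ^+ k0) => //; split=> // z /(prim_rootP w_prim) [k ->] neq_k.
  by rewrite -mup0_char_poly_eq0 mk_eq0 //; apply: contra_not_neq neq_k => ->.
have [k0 ek0] := prim_rootP w_prim z0n1; subst z0.
apply/eqP/sum_nat_eq1; exists k0; split=> // k neq_k _; apply/eqP.
rewrite mup0_char_poly_eq0 z_unit //; apply/eqP.
by rewrite (eq_prim_root_expr w_prim) !modn_small // (inj_eq val_inj).
Qed.

End CayleyDihedral.

Theorem mainTheorem3 (n : nat) (a b : seq nat) :
  (3 <= n)%N ->
  sorted ltn a -> all (fun x => (1 <= x)%N && (x < n)%N) a ->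
  sorted ltn b -> all (fun x => (x < n)%N) b ->
  (forall x : Dih n, x \in Cset n a b -> dih_inv x \in Cset n a b) ->
  nut_graph (cay_adj (Cset n a b)) <->
  exists2 z0 : algC, z0 ^+ n = 1 &
    mup 0 (char_poly (Amat a b z0)) = 1%N /\
    forall z : algC, z ^+ n = 1 -> z <> z0 -> Amat a b z \in unitmx.
Proof.
move=> n_ge3 a_sorted a_range b_sorted b_lt C_sym.
have n_gt0 : (0 < n)%N by apply: leq_trans n_ge3.
have a_uniq := sorted_uniq ltn_trans ltnn a_sorted.
have b_uniq := sorted_uniq ltn_trans ltnn b_sorted.
have a_lt : all (fun y => y < n)%N a by apply: sub_all a_range => y /andP[].
have a_sym y : y \in a -> ((n - y) %% n)%N \in a.
  by move=> ya; have := C_sym (Ordinal (allP a_lt y ya), false); rewrite !inE; apply.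
have mup0E := mup0_cay_dih_eq1 n_gt0 a_uniq b_uniq a_lt b_lt a_sym.
split=> [[_ [/mup0E]] //|[z0 z0n1 [mz0 z_unit]]].
have [v kernel_v] := cay_dih_kernel_full_support n_gt0 a_uniq b_uniq a_lt b_lt a_sym z0n1 mz0.
split; first by rewrite card_prod card_ord card_bool muln2 -addnn ltn_addr // (leq_trans _ n_ge3).
by split; [apply/mup0E; exists z0 | exists v].
Qed.
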